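(* For every precubical set $X$, the stream realization $\vec{|X|}$ is path-ordered.
   Context: Streams: a circulation on a space $X$ assigns to each open $V\subset X$ a preorder $\leqslant_V$ such that for every collection $\mathcal{O}$ of open sets, $\leqslant_{\bigcup\mathcal{O}}$ is the preorder with smallest graph containing $\bigcup_{V\in\mathcal{O}}\mathrm{graph}(\leqslant_V)$; a stream is a space with a circulation; a stream map $f:X\to Y$ is continuous with $f(x)\leqslant_V f(y)$ whenever $x\leqslant_{f^{-1}V}y$. Streams form a cocomplete category, colimits being computed on underlying spaces with the final circulation. $\vec\square[1]$ is $[0,1]$ with circulation $x\leqslant_V y$ iff $x\le y$ and $[x,y]\subset V$; a dipath on $X$ is a stream map $\vec\square[1]\to X$. $X$ is path-ordered if whenever $V\subset X$ is open and $x\leqslant_V y$ there is a dipath from $x$ to $y$ with image in $V$. $\square$ is the smallest subcategory of posets and monotone maps closed under cartesian products (unit $\{0\}$) containing $\delta_\pm:\{0\}\to\{0<1\}$; a precubical set is a functor $X:\square^{op}\to\mathbf{Set}$, $X_n=X([1]^n)$. $\vec\square[n]$ is the $n$-fold product of $\vec\square[1]$ in streams, $\square$-morphisms extend linearly to stream maps, and the stream realization is the coend $\vec{|X|}=\int^{[1]^n}X_n\cdot\vec\square[n]$ in streams. *)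

From Stdlib Require Import Reals.
From mathcomp Require Import all_boot.

Set Implicit Arguments.
Unset Strict Implicit.
Unset Printing Implicit Defensive.

(* A (pre)stream: a carrier with a family of "open" subsets and, for each
   subset V, a relation circ V (only meaningful for open V). The axioms are
   collected in the predicate [is_stream] below. *)
Record stream := Stream {
  carrier :> Type;
  isopen : (carrier -> Prop) -> Prop;
  circ : (carrier -> Prop) -> carrier -> carrier -> Prop }.
Arguments isopen : clear implicits.
Arguments circ : clear implicits.

Definition bigunion (T : Type) (O : (T -> Prop) -> Prop) : T -> Prop :=
  fun x => exists V, O V /\ V x.

Definition is_topology (X : stream) : Prop :=
  isopen X (fun _ => True) /\
  (forall O : (X -> Prop) -> Prop,
      (forall V, O V -> isopen X V) -> isopen X (bigunion O)) /\
  (forall U V, isopen X U -> isopen X V -> isopen X (fun x => U x /\ V x)).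

Definition preorder_on (T : Type) (W : T -> Prop) (r : T -> T -> Prop) : Prop :=
  (forall x y, r x y -> W x /\ W y) /\
  (forall x, W x -> r x x) /\
  (forall x y z, r x y -> r y z -> r x z).

(* the preorder on W with smallest graph containing rl (rl has graph in W x W) *)
Inductive pclos (T : Type) (W : T -> Prop) (rl : T -> T -> Prop) : T -> T -> Prop :=
| pclos_refl x : W x -> pclos W rl x x
| pclos_step x y : rl x y -> pclos W rl x y
| pclos_trans x y z : pclos W rl x y -> pclos W rl y z -> pclos W rl x z.

Definition is_circulation (X : stream) : Prop :=
  (forall V, isopen X V -> preorder_on V (circ X V)) /\
  (forall O : (X -> Prop) -> Prop, (forall V, O V -> isopen X V) ->
     forall x y, circ X (bigunion O) x y <->
       pclos (bigunion O) (fun a b => exists V, O V /\ circ X V a b) x y).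

Definition is_stream (X : stream) : Prop := is_topology X /\ is_circulation X.

Definition is_stream_map (X Y : stream) (f : X -> Y) : Prop :=
  (forall V, isopen Y V -> isopen X (fun x => V (f x))) /\
  (forall V, isopen Y V -> forall x y,
      circ X (fun z => V (f z)) x y -> circ Y V (f x) (f y)).

Definition unit_interval : Type := {t : R | Rle R0 t /\ Rle t R1}.

Definition vI1 : stream :=
  @Stream unit_interval
    (fun U => exists W : R -> Prop, open_set W /\
                forall t : unit_interval, U t <-> W (proj1_sig t))
    (fun V x y => Rle (proj1_sig x) (proj1_sig y) /\
        forall z : unit_interval,
          Rle (proj1_sig x) (proj1_sig z) -> Rle (proj1_sig z) (proj1_sig y) -> V z).

Lemma i0_proof : Rle R0 R0 /\ Rle R0 R1.
Proof. split; [apply Rle_refl | apply Rlt_le, Rlt_0_1]. Qed.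
Lemma i1_proof : Rle R0 R1 /\ Rle R1 R1.
Proof. split; [apply Rlt_le, Rlt_0_1 | apply Rle_refl]. Qed.
Definition i0 : vI1 := (exist (fun t => Rle R0 t /\ Rle t R1) R0 i0_proof : unit_interval).
Definition i1 : vI1 := (exist (fun t => Rle R0 t /\ Rle t R1) R1 i1_proof : unit_interval).

Definition dipath (X : stream) (g : vI1 -> X) : Prop := is_stream_map g.

Definition path_ordered (X : stream) : Prop :=
  forall V, isopen X V -> forall x y, circ X V x y ->
    exists g : vI1 -> X, dipath g /\ g i0 = x /\ g i1 = y /\ forall t, V (g t).

(* the poset [1]^n = {0<1}^n, points as boolean functions on 'I_n *)
Definition bcube (n : nat) := {ffun 'I_n -> bool}.

Definition delta (b : bool) : bcube 0 -> bcube 1 := fun _ => [ffun _ => b].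

(* cartesian product of maps, identifying [1]^a x [1]^c with [1]^(a+c) *)
Definition prod_map (a b c d : nat) (f : bcube a -> bcube b) (g : bcube c -> bcube d)
  : bcube (a + c) -> bcube (b + d) :=
  fun p => [ffun i : 'I_(b + d) =>
    match split i with
    | inl j => f [ffun j' => p (lshift c j')] j
    | inr k => g [ffun k' => p (rshift a k')] k
    end].

(* morphisms of the box category: smallest subcategory (of posets) containing
   delta_-, delta_+ and closed under cartesian products; morphisms are
   functions, so closed under extensional equality *)
Inductive box_mor : forall m n : nat, (bcube m -> bcube n) -> Prop :=
| box_id n : box_mor (fun p : bcube n => p)
| box_comp l m n (f : bcube l -> bcube m) (g : bcube m -> bcube n) :
    box_mor f -> box_mor g -> box_mor (fun p => g (f p))
| box_delta b : box_mor (delta b)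
| box_prod a b c d (f : bcube a -> bcube b) (g : bcube c -> bcube d) :
    box_mor f -> box_mor g -> box_mor (prod_map f g)
| box_ext m n (f g : bcube m -> bcube n) : box_mor f -> f =1 g -> box_mor g.

(* precubical set: functor box^op -> Set *)
Record precubical := Precubical {
  pc_set :> nat -> Type;
  pc_act : forall m n (f : bcube m -> bcube n), box_mor f -> pc_set n -> pc_set m;
  pc_act_ext : forall m n (f g : bcube m -> bcube n) (hf : box_mor f) (hg : box_mor g),
      f =1 g -> forall x, pc_act hf x = pc_act hg x;
  pc_act_id : forall n (h : box_mor (fun p : bcube n => p)) x, pc_act h x = x;
  pc_act_comp : forall l m n (f : bcube l -> bcube m) (g : bcube m -> bcube n)
      (hf : box_mor f) (hg : box_mor g) (hgf : box_mor (fun p => g (f p))) x,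
      pc_act hgf x = pc_act hf (pc_act hg x) }.

Definition rsum (T : finType) (F : T -> R) : R :=
  foldr (fun x acc => Rplus (F x) acc) R0 (enum T).
Definition rprod (T : finType) (F : T -> R) : R :=
  foldr (fun x acc => Rmult (F x) acc) R1 (enum T).

(* (multi)linear extension of f : {0,1}^m -> {0,1}^n to [0,1]^m -> [0,1]^n,
   coordinate k at the point t *)
Definition linext (m n : nat) (f : bcube m -> bcube n) (t : 'I_m -> R) (k : 'I_n) : R :=
  rsum (fun v : bcube m =>
    Rmult (rprod (fun j : 'I_m => if v j then t j else Rminus R1 (t j)))
          (if f v k then R1 else R0)).

Definition is_product_vI1 (n : nat) (P : stream) (pr : 'I_n -> P -> vI1) : Prop :=
  (forall i, is_stream_map (pr i)) /\
  forall Z : stream, is_stream Z ->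
  forall h : 'I_n -> Z -> vI1, (forall i, is_stream_map (h i)) ->
    (exists u : Z -> P, is_stream_map u /\ forall i z, pr i (u z) = h i z) /\
    (forall u u' : Z -> P, is_stream_map u -> is_stream_map u' ->
       (forall i z, pr i (u z) = h i z) -> (forall i z, pr i (u' z) = h i z) ->
       forall z, u z = u' z).

Definition linear_cube_maps (Cube : nat -> stream) (pr : forall n, 'I_n -> Cube n -> vI1)
  (cmap : forall m n (f : bcube m -> bcube n), box_mor f -> Cube m -> Cube n) : Prop :=
  forall m n (f : bcube m -> bcube n) (hf : box_mor f),
    is_stream_map (cmap m n f hf) /\
    forall t k, proj1_sig (pr n k (cmap m n f hf t)) =
                linext f (fun j => proj1_sig (pr m j t)) k.

(* a wedge (cocone) from the functor ([1]^m,[1]^n) |-> X_m . \vec\square[n]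
   to Y: for each m and x in X_m a stream map j m x : \vec\square[m] -> Y *)
Definition is_wedge (X : precubical) (Cube : nat -> stream)
  (cmap : forall m n (f : bcube m -> bcube n), box_mor f -> Cube m -> Cube n)
  (Y : stream) (j : forall m, X m -> Cube m -> Y) : Prop :=
  (forall m x, is_stream_map (j m x)) /\
  forall m n (f : bcube m -> bcube n) (hf : box_mor f) (x : X n) (t : Cube m),
    j n x (cmap m n f hf t) = j m (pc_act hf x) t.

(* (Y, iota) is the coend  \int^{[1]^n} X_n . \vec\square[n]  in streams *)
Definition is_coend (X : precubical) (Cube : nat -> stream)
  (cmap : forall m n (f : bcube m -> bcube n), box_mor f -> Cube m -> Cube n)
  (Y : stream) (iota : forall m, X m -> Cube m -> Y) : Prop :=
  is_wedge cmap iota /\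
  forall Z : stream, is_stream Z ->
  forall j : forall m, X m -> Cube m -> Z, is_wedge cmap j ->
    (exists u : Y -> Z, is_stream_map u /\ forall m x t, u (iota m x t) = j m x t) /\
    (forall u u' : Y -> Z, is_stream_map u -> is_stream_map u' ->
       (forall m x t, u (iota m x t) = j m x t) ->
       (forall m x t, u' (iota m x t) = j m x t) ->
       forall y, u y = u' y).

From Stdlib Require Import Reals Lra.
From mathcomp Require Import all_boot.
From Stdlib Require Import Classical FunctionalExtensionality PropExtensionality ProofIrrelevance.
Open Scope R_scope.

(* Write [dipath_in V x y] for "some dipath inside V runs from x to y"; a
   stream is path-ordered when circ V x y always implies dipath_in V x y.

   1. The directed interval vI1 is a stream, and the affine
      reparametrisations [seg a b] of it are stream maps; hence dipaths can
      be restricted to subintervals and concatenated.  Local-to-global steps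
      along [0,1] use real induction (a supremum argument).
   2. For any stream S, strengthening its circulation by "and dipath_in V x y"
      yields a stream [pstream S] on the same space.  Stream maps out of
      path-ordered streams into S are stream maps into [pstream S].
   3. A product of copies of vI1 is path-ordered: its opens are unions of
      boxes, its circulation is generated by the box pieces, and inside a box
      the coordinatewise straight line is a dipath.
   4. For the coend, the structure maps (out of path-ordered cubes) lift to
      [pstream Real]; uniqueness in the universal property makes the induced
      map Real -> pstream Real the identity, which is the claim. *)

Lemma open_set_ball {W : R -> Prop} {z : R} : open_set W -> W z ->
  exists d, 0 < d /\ forall r, Rabs (r - z) < d -> W r.
Proof.
intros HW Hz. destruct (HW z Hz) as [[d Hd] Hin].
exists d. split; [exact Hd|]. intros r Hr. apply Hin. exact Hr.
Qed.

Lemma open_set_of_balls (W : R -> Prop) :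
  (forall z, W z -> exists d, 0 < d /\ forall r, Rabs (r - z) < d -> W r) -> open_set W.
Proof.
intros H z Hz. destruct (H z Hz) as [d [Hd Hin]].
exists (mkposreal d Hd). intros r Hr. apply Hin. exact Hr.
Qed.

(* This is how local
   information on the interval (openness of covers) is turned into global
   chains; the proof takes the supremum of the points reached. *)
Lemma real_induction {a b : R} (Q : R -> Prop) :
  a <= b -> Q a ->
  (forall z, a <= z <= b -> exists d, 0 < d /\ forall s t, a <= s -> s <= t -> t <= b ->
       z - d < s -> t < z + d -> Q s -> Q t) -> Q b.
Proof.
intros Hab Qa Hloc.
set (E := fun r => a <= r <= b /\ Q r).
assert (HB : bound E) by (exists b; intros r [[_ H] _]; exact H).
assert (HE : exists x, E x) by (exists a; split; [lra|exact Qa]).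
destruct (completeness E HB HE) as [m [Hub Hlub]].
assert (Ham : a <= m) by (apply Hub; split; [lra|exact Qa]).
assert (Hmb : m <= b) by (apply Hlub; intros r [[_ H] _]; exact H).
destruct (Hloc m (conj Ham Hmb)) as [d [Hd Hl]].
assert (Hclose : exists r, E r /\ m - d < r).
{ apply NNPP. intro Hn. assert (m <= m - d); [|lra].
  apply Hlub. intros r Er. apply Rnot_lt_le. intro Hlt. apply Hn. exists r. auto. }
destruct Hclose as [r [[[Har Hrb] Qr] Hrm]].
assert (Hrm' : r <= m) by (apply Hub; split; [lra|exact Qr]).
destruct (Rle_dec (m + d/2) b) as [Hle|Hgt].
- assert (Qt : Q (m + d/2)) by (apply (Hl r); try lra; exact Qr).
  assert (m + d/2 <= m); [|lra]. apply Hub. split; [lra|exact Qt].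
- apply (Hl r); try lra; exact Qr.
Qed.

Lemma unit_interval_eq (s t : unit_interval) : proj1_sig s = proj1_sig t -> s = t.
Proof.
destruct s as [s Hs], t as [t Ht]; simpl; intros ->.
f_equal; apply proof_irrelevance.
Qed.

Definition point {r : R} (H : 0 <= r <= 1) : unit_interval := exist _ r H.

Definition clamp (r : R) : R := Rmax 0 (Rmin r 1).

Ltac unfold_clamp :=
  unfold clamp, Rmax, Rmin in *;
  repeat match goal with
  | |- context [Rle_dec ?a ?b] => destruct (Rle_dec a b)
  | H : context [Rle_dec ?a ?b] |- _ => destruct (Rle_dec a b)
  end.

Lemma clamp_range (r : R) : 0 <= clamp r <= 1.
Proof. unfold_clamp; lra. Qed.

Lemma clamp_eq (r s : R) : r = s -> 0 <= s <= 1 -> clamp r = s.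
Proof. intros -> H. unfold_clamp; lra. Qed.

Lemma clamp_lipschitz (x y : R) : Rabs (clamp x - clamp y) <= Rabs (x - y).
Proof.
unfold_clamp; unfold Rabs;
  repeat match goal with |- context [Rcase_abs ?a] => destruct (Rcase_abs a) end; lra.
Qed.

Lemma clamp_mono (x y : R) : x <= y -> clamp x <= clamp y.
Proof. intros. unfold_clamp; lra. Qed.

Definition seg (a b : R) (t : vI1) : vI1 :=
  exist _ (clamp (a + proj1_sig t * (b - a))) (clamp_range _).

Lemma seg_val (a b : R) (t : vI1) : proj1_sig (seg a b t) = clamp (a + proj1_sig t * (b - a)).
Proof. reflexivity. Qed.

Lemma seg_i0 (a b : R) : 0 <= a <= 1 -> proj1_sig (seg a b i0) = a.
Proof. intros H. apply clamp_eq; simpl; [ring|exact H]. Qed.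

Lemma seg_i1 (a b : R) : 0 <= b <= 1 -> proj1_sig (seg a b i1) = b.
Proof. intros H. apply clamp_eq; simpl; [ring|exact H]. Qed.

Lemma seg_between (a b : R) (t : vI1) : 0 <= a -> a <= b -> b <= 1 ->
  a <= proj1_sig (seg a b t) <= b.
Proof.
intros Ha Hab Hb. destruct t as [tv Ht]. rewrite seg_val. simpl.
rewrite (@clamp_eq _ (a + tv * (b - a))); [nra|reflexivity|nra].
Qed.

Lemma seg_onto {a b : R} {s t z : vI1} : a <= b -> proj1_sig s <= proj1_sig t ->
  proj1_sig (seg a b s) <= proj1_sig z <= proj1_sig (seg a b t) ->
  exists w : vI1, proj1_sig s <= proj1_sig w <= proj1_sig t /\ seg a b w = z.
Proof.
intros Hab Hst [H1 H2]. rewrite !seg_val in H1, H2.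
destruct (Req_dec (proj1_sig z) (clamp (a + proj1_sig s * (b - a)))) as [He|Hne].
{ exists s. split; [lra|]. apply unit_interval_eq. symmetry. exact He. }
destruct z as [zv Hz], s as [sv Hs], t as [tv Ht]; simpl in *.
assert (Hlt : clamp (a + sv * (b - a)) < zv) by lra.
assert (Hba : a < b).
{ destruct (Req_dec a b) as [E|E]; [subst b|lra].
  replace (a + sv * (a - a)) with (a + tv * (a - a)) in Hlt by ring. lra. }
assert (Hsz : a + sv * (b - a) < zv) by (revert Hlt; unfold_clamp; lra).
assert (Hzt : zv <= a + tv * (b - a))
  by (pose proof (clamp_range (a + sv * (b - a))); revert H2 Hlt; unfold_clamp; lra).
set (w := (zv - a) / (b - a)).
assert (Hw : w * (b - a) = zv - a) by (unfold w; field; lra).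
assert (Hw01 : 0 <= w <= 1) by nra.
exists (point Hw01). simpl. split; [nra|].
apply unit_interval_eq. simpl. apply clamp_eq; lra.
Qed.

Section StreamAxioms.
Context {S : stream} (HS : is_stream S).

Lemma stream_open_full : isopen S (fun _ => True).
Proof. exact (proj1 (proj1 HS)). Qed.

Lemma stream_open_union {O : (S -> Prop) -> Prop} :
  (forall V, O V -> isopen S V) -> isopen S (bigunion O).
Proof. exact (proj1 (proj2 (proj1 HS)) O). Qed.

Lemma stream_open_inter {U V : S -> Prop} :
  isopen S U -> isopen S V -> isopen S (fun x => U x /\ V x).
Proof. exact (proj2 (proj2 (proj1 HS)) U V). Qed.

Lemma circ_refl {V : S -> Prop} {x : S} : isopen S V -> V x -> circ S V x x.
Proof. intros HV. exact (proj1 (proj2 (proj1 (proj2 HS) V HV)) x). Qed.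

Lemma circ_trans {V : S -> Prop} {x y z : S} : isopen S V ->
  circ S V x y -> circ S V y z -> circ S V x z.
Proof. intros HV. exact (proj2 (proj2 (proj1 (proj2 HS) V HV)) x y z). Qed.

Lemma circ_union {O : (S -> Prop) -> Prop} {x y : S} : (forall V, O V -> isopen S V) ->
  circ S (bigunion O) x y <-> pclos (bigunion O) (fun a b => exists V, O V /\ circ S V a b) x y.
Proof. intros HO. exact (proj2 (proj2 HS) O HO x y). Qed.

(* The circulation is monotone in the open set: V is a piece of the cover {V, V'}. *)
Lemma circ_mono {V V' : S -> Prop} {x y : S} : isopen S V -> isopen S V' ->
  (forall z, V z -> V' z) -> circ S V x y -> circ S V' x y.
Proof.
intros HV HV' Hsub H.
set (O := fun W => W = V \/ W = V').
assert (HO : forall W, O W -> isopen S W) by (intros W [->| ->]; auto).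
assert (E : bigunion O = V').
{ apply functional_extensionality. intros z. apply propositional_extensionality. split.
  - intros [W [[->| ->] Wz]]; auto.
  - intros Hz. exists V'. split; [right; reflexivity|exact Hz]. }
rewrite <- E. apply (circ_union HO). apply pclos_step. exists V. split; [left; reflexivity|exact H].
Qed.

End StreamAxioms.

Lemma stream_map_comp {X Y Z : stream} {f : X -> Y} {g : Y -> Z} :
  is_stream_map f -> is_stream_map g -> is_stream_map (fun x => g (f x)).
Proof.
intros [Hf1 Hf2] [Hg1 Hg2]. split.
- intros V HV. exact (Hf1 _ (Hg1 V HV)).
- intros V HV x y H. apply (Hg2 V HV). apply (Hf2 _ (Hg1 V HV)). exact H.
Qed.

Lemma stream_map_id (S : stream) : is_stream_map (fun x : S => x).
Proof. split; [intros V HV; exact HV|intros V HV x y H; exact H]. Qed.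

Lemma vI1_open_const (P : Prop) : isopen vI1 (fun _ => P).
Proof.
exists (fun _ => P). split; [|tauto].
apply open_set_of_balls. intros z Hz. exists 1. split; [lra|auto].
Qed.

Lemma vI1_topology : is_topology vI1.
Proof.
split; [|split].
- apply vI1_open_const.
- intros O HO.
  exists (fun r => exists V, O V /\ exists W, open_set W /\
            (forall t : unit_interval, V t <-> W (proj1_sig t)) /\ W r).
  split.
  + apply open_set_of_balls. intros z [V [OV [W [HW [HVW Wz]]]]].
    destruct (open_set_ball HW Wz) as [d [Hd Hin]]. exists d. split; [exact Hd|].
    intros r Hr. exists V. split; [exact OV|]. exists W. auto.
  + intros t. split.
    * intros [V [OV Vt]]. destruct (HO V OV) as [W [HW HVW]].
      exists V. split; [exact OV|]. exists W. split; [exact HW|].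
      split; [exact HVW|]. apply HVW; exact Vt.
    * intros [V [OV [W [HW [HVW Wt]]]]]. exists V. split; [exact OV|]. apply HVW; exact Wt.
- intros U V [W1 [HW1 H1]] [W2 [HW2 H2]].
  exists (fun r => W1 r /\ W2 r). split.
  + apply open_set_of_balls. intros z [Hz1 Hz2].
    destruct (open_set_ball HW1 Hz1) as [d1 [Hd1 Hin1]].
    destruct (open_set_ball HW2 Hz2) as [d2 [Hd2 Hin2]].
    exists (Rmin d1 d2). split; [apply Rmin_glb_lt; auto|].
    pose proof (Rmin_l d1 d2). pose proof (Rmin_r d1 d2).
    intros r Hr. split; [apply Hin1|apply Hin2]; lra.
  + intros t. rewrite (H1 t) (H2 t). tauto.
Qed.

Lemma vI1_preorder (V : vI1 -> Prop) : preorder_on V (circ vI1 V).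
Proof.
split; [|split].
- intros x y [Hxy Hin]. split; apply Hin; lra.
- intros x Vx. split; [lra|]. intros z H1 H2.
  assert (z = x) by (apply unit_interval_eq; lra). subst; exact Vx.
- intros x y z [Hxy Hin1] [Hyz Hin2]. split; [lra|].
  intros w H1 H2. destruct (Rle_dec (proj1_sig w) (proj1_sig y)).
  + apply Hin1; lra.
  + apply Hin2; lra.
Qed.

Lemma vI1_circ_generated (O : (vI1 -> Prop) -> Prop) (x y : vI1) :
  (forall V, O V -> isopen vI1 V) -> circ vI1 (bigunion O) x y ->
  pclos (bigunion O) (fun a b => exists V, O V /\ circ vI1 V a b) x y.
Proof.
intros HO [Hxy Hin].
set (Q := fun r => forall t : unit_interval, proj1_sig t = r ->
   pclos (bigunion O) (fun a b => exists V, O V /\ circ vI1 V a b) x t).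
enough (HQ : Q (proj1_sig y)) by (apply HQ; reflexivity).
apply (real_induction Q Hxy).
- intros t Ht. assert (t = x) by (apply unit_interval_eq; exact Ht). subst t.
  apply pclos_refl. apply Hin; lra.
- intros z Hz. destruct x as [xv Hx], y as [yv Hy]; simpl in *.
  assert (Hz01 : 0 <= z <= 1) by lra.
  destruct (Hin (point Hz01)) as [V [OV Vz]]; simpl; try lra.
  destruct (HO V OV) as [W [HW HVW]].
  destruct (open_set_ball HW (proj1 (HVW _) Vz)) as [d [Hd Hball]].
  exists d. split; [exact Hd|].
  intros s t Hs Hst Ht Hs' Ht' Qs t' Ht'v.
  assert (Hs01 : 0 <= s <= 1) by lra.
  apply pclos_trans with (point Hs01); [apply Qs; reflexivity|].
  apply pclos_step. exists V. split; [exact OV|]. split; simpl; [lra|].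
  intros w H1 H2. simpl in H1, H2. apply HVW. apply Hball. simpl. rewrite Ht'v in H2.
  unfold Rabs; destruct (Rcase_abs _); lra.
Qed.

Lemma vI1_stream : is_stream vI1.
Proof.
split; [exact vI1_topology|]. split.
- intros V _. apply vI1_preorder.
- intros O HO x y. split; [apply vI1_circ_generated; exact HO|].
  intros H. induction H as [a Wa|a b [V [OV [Hab Hin]]]|a b c _ IH1 _ IH2].
  + apply vI1_preorder; exact Wa.
  + split; [exact Hab|]. intros z H1 H2. exists V. split; [exact OV|]. apply Hin; auto.
  + eapply (proj2 (proj2 (vI1_preorder _))); eauto.
Qed.

Lemma seg_open (a b : R) (U : vI1 -> Prop) :
  isopen vI1 U -> isopen vI1 (fun t => U (seg a b t)).
Proof.
intros [W [HW HU]].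
exists (fun r => W (clamp (a + r * (b - a)))). split.
- apply open_set_of_balls. intros z Hz.
  destruct (open_set_ball HW Hz) as [d [Hd Hin]].
  pose proof (Rabs_pos (b - a)) as Hba.
  exists (d / (Rabs (b - a) + 1)). split; [apply Rdiv_lt_0_compat; lra|].
  intros r Hr. apply Hin.
  eapply Rle_lt_trans; [apply clamp_lipschitz|].
  replace (a + r * (b - a) - (a + z * (b - a))) with ((r - z) * (b - a)) by ring.
  rewrite Rabs_mult. pose proof (Rabs_pos (r - z)).
  assert (Hr' : Rabs (r - z) * (Rabs (b - a) + 1) < d).
  { apply (Rmult_lt_compat_r (Rabs (b - a) + 1)) in Hr; [|lra].
    unfold Rdiv in Hr. rewrite Rmult_assoc Rinv_l in Hr; lra. }
  nra.
- intros t. apply HU.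
Qed.

Lemma seg_circ (a b : R) (V : vI1 -> Prop) (s t : vI1) : a <= b ->
  circ vI1 (fun z => V (seg a b z)) s t -> circ vI1 V (seg a b s) (seg a b t).
Proof.
intros Hab [Hst Hin]. split.
- rewrite !seg_val. apply clamp_mono. nra.
- intros z H1 H2. destruct (seg_onto Hab Hst (conj H1 H2)) as [w [[Hsw Hwt] <-]].
  apply Hin; assumption.
Qed.

Lemma seg_stream_map {a b : R} : a <= b -> is_stream_map (seg a b).
Proof.
intros Hab. split.
- intros V HV. apply seg_open. exact HV.
- intros V _ x y H. apply seg_circ; assumption.
Qed.

Lemma const_dipath {S : stream} (x : S) : is_stream S -> dipath (fun _ : vI1 => x).
Proof.
intros HS. split.
- intros V _. apply vI1_open_const.
- intros V HV s t [Hst Hin]. apply (circ_refl HS HV). apply (Hin s); lra.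
Qed.

Lemma open_paste (W1 W2 : R -> Prop) (c : R) : open_set W1 -> open_set W2 ->
  open_set (fun r => (r < c /\ W1 r) \/ (r > c /\ W2 r) \/ (W1 r /\ W2 r)).
Proof.
intros HW1 HW2. apply open_set_of_balls. intros z [[Hz Wz]|[[Hz Wz]|[Wz1 Wz2]]].
- destruct (open_set_ball HW1 Wz) as [d [Hd Hin]].
  exists (Rmin d (c - z)). split; [apply Rmin_glb_lt; lra|].
  intros r Hr. pose proof (Rmin_l d (c - z)). pose proof (Rmin_r d (c - z)).
  left. split; [|apply Hin; lra]. revert Hr; unfold Rabs; destruct (Rcase_abs _); lra.
- destruct (open_set_ball HW2 Wz) as [d [Hd Hin]].
  exists (Rmin d (z - c)). split; [apply Rmin_glb_lt; lra|].
  intros r Hr. pose proof (Rmin_l d (z - c)). pose proof (Rmin_r d (z - c)).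
  right; left. split; [|apply Hin; lra]. revert Hr; unfold Rabs; destruct (Rcase_abs _); lra.
- destruct (open_set_ball HW1 Wz1) as [d1 [Hd1 Hin1]].
  destruct (open_set_ball HW2 Wz2) as [d2 [Hd2 Hin2]].
  exists (Rmin d1 d2). split; [apply Rmin_glb_lt; lra|].
  intros r Hr. pose proof (Rmin_l d1 d2). pose proof (Rmin_r d1 d2).
  right; right. split; [apply Hin1|apply Hin2]; lra.
Qed.

Definition concat {S : stream} (g1 g2 : vI1 -> S) (t : vI1) : S :=
  if Rle_dec (proj1_sig t) (1/2) then g1 (seg 0 2 t) else g2 (seg (-1) 1 t).

Section Concatenation.
Context {S : stream} (g1 g2 : vI1 -> S).
Hypothesis Hjoin : g1 i1 = g2 i0.

Lemma concat_left (t : vI1) : proj1_sig t <= 1/2 -> concat g1 g2 t = g1 (seg 0 2 t).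
Proof. intros H. unfold concat. destruct (Rle_dec _ _); [reflexivity|lra]. Qed.

Lemma concat_right (t : vI1) : 1/2 <= proj1_sig t -> concat g1 g2 t = g2 (seg (-1) 1 t).
Proof.
intros H. unfold concat. destruct (Rle_dec _ _) as [H'|H']; [|reflexivity].
assert (E1 : seg 0 2 t = i1) by (apply unit_interval_eq, clamp_eq; simpl; lra).
assert (E2 : seg (-1) 1 t = i0) by (apply unit_interval_eq, clamp_eq; simpl; lra).
rewrite E1 E2. exact Hjoin.
Qed.

Lemma concat_i0 : concat g1 g2 i0 = g1 i0.
Proof.
rewrite concat_left; [|simpl; lra]. f_equal. apply unit_interval_eq, clamp_eq; simpl; lra.
Qed.

Lemma concat_i1 : concat g1 g2 i1 = g2 i1.
Proof.
rewrite concat_right; [|simpl; lra]. f_equal. apply unit_interval_eq, clamp_eq; simpl; lra.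
Qed.

Lemma concat_inside (V : S -> Prop) :
  (forall t, V (g1 t)) -> (forall t, V (g2 t)) -> forall t, V (concat g1 g2 t).
Proof. intros H1 H2 t. unfold concat. destruct (Rle_dec _ _); [apply H1|apply H2]. Qed.

Hypotheses (Hg1 : dipath g1) (Hg2 : dipath g2).

Lemma concat_first_half : is_stream_map (fun t => g1 (seg 0 2 t)).
Proof. exact (stream_map_comp (seg_stream_map (a := 0) (b := 2) ltac:(lra)) Hg1). Qed.

Lemma concat_second_half : is_stream_map (fun t => g2 (seg (-1) 1 t)).
Proof. exact (stream_map_comp (seg_stream_map (a := -1) (b := 1) ltac:(lra)) Hg2). Qed.

Lemma concat_open (U : S -> Prop) : isopen S U -> isopen vI1 (fun t => U (concat g1 g2 t)).
Proof.
intros HU.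
destruct (proj1 concat_first_half U HU) as [W1 [HW1 E1]]. destruct (proj1 concat_second_half U HU) as [W2 [HW2 E2]].
exists (fun r => (r < 1/2 /\ W1 r) \/ (r > 1/2 /\ W2 r) \/ (W1 r /\ W2 r)).
split; [apply open_paste; assumption|].
intros t. simpl in E1, E2. specialize (E1 t). specialize (E2 t).
destruct (Rtotal_order (proj1_sig t) (1/2)) as [Hlt|[Heq|Hgt]].
- rewrite concat_left; [|lra]. rewrite E1. split; [left; auto|].
  intros [[_ H]|[[H _]|[H _]]]; auto; lra.
- assert (Hsame : U (g1 (seg 0 2 t)) <-> U (g2 (seg (-1) 1 t)))
    by (rewrite <- concat_left, <- concat_right; [tauto|lra|lra]).
  rewrite concat_left; [|lra]. split; [intros; right; right; tauto|].
  intros [[H1 _]|[[H1 _]|[H3 _]]]; [lra|lra|tauto].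
- rewrite concat_right; [|lra]. rewrite E2. split; [right; left; auto|].
  intros [[H1 _]|[[_ H3]|[_ H3]]]; [lra|exact H3|exact H3].
Qed.

Lemma concat_circ (V : S -> Prop) (s t : vI1) : is_stream S -> isopen S V ->
  circ vI1 (fun z => V (concat g1 g2 z)) s t -> circ S V (concat g1 g2 s) (concat g1 g2 t).
Proof.
intros HS HV.
assert (Left : forall s t, proj1_sig t <= 1/2 ->
          circ vI1 (fun z => V (concat g1 g2 z)) s t -> circ S V (concat g1 g2 s) (concat g1 g2 t)).
{ intros s' t' Ht [Hst Hin]. rewrite !concat_left; try lra.
  apply (proj2 concat_first_half V HV). split; [exact Hst|]. intros z H1 H2.
  rewrite <- (concat_left z); [|lra]. apply Hin; lra. }
assert (Right : forall s t, 1/2 <= proj1_sig s ->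
          circ vI1 (fun z => V (concat g1 g2 z)) s t -> circ S V (concat g1 g2 s) (concat g1 g2 t)).
{ intros s' t' Hs [Hst Hin]. rewrite !concat_right; try lra.
  apply (proj2 concat_second_half V HV). split; [exact Hst|]. intros z H1 H2.
  rewrite <- (concat_right z); [|lra]. apply Hin; lra. }
intros Hc.
destruct (Rle_dec (proj1_sig t) (1/2)); [apply Left; auto|].
destruct (Rle_dec (1/2) (proj1_sig s)); [apply Right; auto|].
assert (Hh : 0 <= 1/2 <= 1) by lra.
destruct Hc as [Hst Hin].
apply (circ_trans HS HV (y := concat g1 g2 (point Hh))).
- apply Left; [simpl; lra|]. split; [simpl; lra|]. intros z H1 H2; apply Hin; simpl in *; lra.
- apply Right; [simpl; lra|]. split; [simpl; lra|]. intros z H1 H2; apply Hin; simpl in *; lra.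
Qed.

Lemma concat_dipath : is_stream S -> dipath (concat g1 g2).
Proof.
intros HS. split; [exact concat_open|]. intros V HV s t. apply concat_circ; assumption.
Qed.

End Concatenation.

Definition dipath_in {S : stream} (V : S -> Prop) (x y : S) : Prop :=
  exists g : vI1 -> S, dipath g /\ g i0 = x /\ g i1 = y /\ forall t, V (g t).

Lemma dipath_in_refl {S : stream} (V : S -> Prop) (x : S) : is_stream S -> V x -> dipath_in V x x.
Proof. intros HS Vx. exists (fun _ => x). split; [apply const_dipath; exact HS|]. auto. Qed.

Lemma dipath_in_trans {S : stream} {V : S -> Prop} {x y z : S} : is_stream S ->
  dipath_in V x y -> dipath_in V y z -> dipath_in V x z.
Proof.
intros HS [g1 [H1 [E10 [E11 I1]]]] [g2 [H2 [E20 [E21 I2]]]].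
assert (J : g1 i1 = g2 i0) by congruence.
exists (concat g1 g2). split; [apply concat_dipath; assumption|].
split; [rewrite concat_i0; exact E10|]. split; [rewrite concat_i1; congruence|].
apply concat_inside; assumption.
Qed.

Lemma dipath_in_mono {S : stream} (V V' : S -> Prop) (x y : S) :
  (forall z, V z -> V' z) -> dipath_in V x y -> dipath_in V' x y.
Proof. intros H [g [Hg [E0 [E1 I]]]]. exists g. auto. Qed.

Lemma dipath_restrict {S : stream} (V : S -> Prop) (g : vI1 -> S) (s t : vI1) : dipath g ->
  proj1_sig s <= proj1_sig t ->
  (forall w : vI1, proj1_sig s <= proj1_sig w <= proj1_sig t -> V (g w)) ->
  dipath_in V (g s) (g t).
Proof.
intros Hg Hst Hin.
exists (fun w => g (seg (proj1_sig s) (proj1_sig t) w)).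
split; [apply (stream_map_comp (seg_stream_map Hst) Hg)|].
destruct s as [sv Hs], t as [tv Ht]. simpl in *.
split; [f_equal; apply unit_interval_eq, seg_i0; exact Hs|].
split; [f_equal; apply unit_interval_eq, seg_i1; exact Ht|].
intros w. apply Hin. apply seg_between; lra.
Qed.

(* It is again a stream, and S is
   path-ordered exactly when the identity S -> pstream S is a stream map. *)
Definition pstream (S : stream) : stream :=
  @Stream (carrier S) (isopen S) (fun V x y => circ S V x y /\ dipath_in V x y).

Lemma dipath_chain {S : stream} (O : (S -> Prop) -> Prop) (g : vI1 -> S) :
  (forall V, O V -> isopen S V) -> dipath g -> (forall t, bigunion O (g t)) ->
  pclos (bigunion O) (fun a b => exists V, O V /\ circ S V a b /\ dipath_in V a b)
    (g i0) (g i1).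
Proof.
intros HO Hg Hin.
set (Q := fun r => forall t : vI1, proj1_sig t = r ->
  pclos (bigunion O) (fun a b => exists V, O V /\ circ S V a b /\ dipath_in V a b) (g i0) (g t)).
enough (HQ : Q 1) by (apply HQ; reflexivity).
apply (real_induction (a := 0) Q); [lra| |].
- intros t Ht. assert (t = i0) by (apply unit_interval_eq; exact Ht). subst t.
  apply pclos_refl. apply Hin.
- intros z Hz.
  destruct (Hin (point Hz)) as [V [OV Vz]].
  destruct (proj1 Hg V (HO V OV)) as [W [HW HVW]].
  destruct (open_set_ball HW (proj1 (HVW _) Vz)) as [d [Hd Hball]].
  exists d. split; [exact Hd|].
  intros s t Hs Hst Ht Hs' Ht' Qs t' Ht'v.
  assert (Hs01 : 0 <= s <= 1) by lra.
  assert (Hloc : forall w : vI1, s <= proj1_sig w <= proj1_sig t' -> V (g w)).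
  { intros w Hw. apply HVW. apply Hball. simpl. rewrite Ht'v in Hw.
    unfold Rabs; destruct (Rcase_abs _); lra. }
  apply pclos_trans with (g (point Hs01)); [apply Qs; reflexivity|].
  apply pclos_step. exists V. split; [exact OV|]. split.
  + apply (proj2 Hg V (HO V OV)). split; [simpl; lra|].
    intros w H1 H2. apply Hloc. simpl in *. lra.
  + apply dipath_restrict; [exact Hg|simpl; lra|]. intros w Hw. apply Hloc. simpl in *. lra.
Qed.

Section PathCirculation.
Context {S : stream} (HS : is_stream S).

Lemma pstream_preorder (V : S -> Prop) : isopen S V -> preorder_on V (circ (pstream S) V).
Proof.
intros HV. pose proof (proj1 (proj2 HS) V HV) as [P1 [P2 P3]]. split; [|split].
- intros x y [H _]. exact (P1 x y H).
- intros x Vx. split; [exact (P2 x Vx)|]. apply dipath_in_refl; assumption.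
- intros x y z [H1 H2] [H3 H4]. split; [exact (P3 x y z H1 H3)|].
  apply (dipath_in_trans HS H2 H4).
Qed.

Lemma pstream_stream : is_stream (pstream S).
Proof.
split; [exact (proj1 HS)|]. split; [exact pstream_preorder|].
intros O HO x y. simpl. split.
- intros [_ [g [Hg [<- [<- Hin]]]]]. apply dipath_chain; assumption.
- intros H. pose proof (stream_open_union HS HO) as HU.
  induction H as [a Wa|a b [V [OV [Hab Hp]]]|a b c _ [IH1 IH1'] _ [IH2 IH2']].
  + split; [exact (circ_refl HS HU Wa)|]. apply dipath_in_refl; assumption.
  + split.
    * apply (circ_union HS HO). apply pclos_step. exists V. auto.
    * apply (dipath_in_mono V); [|exact Hp]. intros z Vz. exists V. auto.
  + split; [exact (circ_trans HS HU IH1 IH2)|]. apply (dipath_in_trans HS IH1' IH2').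
Qed.

Lemma lift_to_pstream {X : stream} (f : X -> S) : path_ordered X -> is_stream_map f ->
  is_stream_map (X := X) (Y := pstream S) f.
Proof.
intros HX [Hf1 Hf2]. split; [exact Hf1|].
intros V HV x y H. split; [exact (Hf2 V HV x y H)|].
destruct (HX _ (Hf1 V HV) x y H) as [g [Hg [E0 [E1 Hin]]]].
exists (fun t => f (g t)). split; [exact (stream_map_comp Hg (conj Hf1 Hf2))|].
split; [rewrite E0; reflexivity|]. split; [rewrite E1; reflexivity|]. exact Hin.
Qed.

End PathCirculation.

Lemma pstream_forget (S : stream) : is_stream_map (X := pstream S) (Y := S) (fun x => x).
Proof. split; [intros V HV; exact HV|intros V HV x y [H _]; exact H]. Qed.

Section Cubes.
Context {n : nat} {P : stream} {pr : 'I_n -> P -> vI1}.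
Hypotheses (HP : is_stream P) (Hprod : is_product_vI1 pr).

(* A point of P is determined by its coordinates (test the universal property
   on constant maps out of vI1). *)
Lemma product_ext (p q : P) : (forall i, pr i p = pr i q) -> p = q.
Proof.
intros H.
destruct (proj2 Hprod vI1 vI1_stream (fun i _ => pr i p)
            (fun i => const_dipath (pr i p) vI1_stream)) as [_ Huniq].
exact (Huniq (fun _ => p) (fun _ => q) (const_dipath p HP) (const_dipath q HP)
        (fun i z => erefl) (fun i z => esym (H i)) i0).
Qed.

Definition box (U : 'I_n -> vI1 -> Prop) (z : P) : Prop := forall i, U i (pr i z).

Definition box_open (V : P -> Prop) : Prop :=
  forall x, V x -> exists U : 'I_n -> vI1 -> Prop, (forall i, isopen vI1 (U i)) /\
     box U x /\ (forall z, box U z -> V z).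

Definition box_stream : stream :=
  @Stream (carrier P) box_open (fun V x y => V x /\ x = y).

Lemma box_stream_topology : is_topology box_stream.
Proof.
split; [|split].
- intros x _. exists (fun _ _ => True). split; [intros; apply vI1_open_const|].
  split; [intros i; exact I|intros; exact I].
- intros O HO x [V [OV Vx]]. destruct (HO V OV x Vx) as [U [HU [Ux UV]]].
  exists U. split; [exact HU|]. split; [exact Ux|]. intros z Hz. exists V. auto.
- intros A B HA HB x [Ax Bx].
  destruct (HA x Ax) as [U1 [HU1 [U1x U1A]]]. destruct (HB x Bx) as [U2 [HU2 [U2x U2B]]].
  exists (fun i w => U1 i w /\ U2 i w).
  split; [intros i; apply (stream_open_inter vI1_stream); auto|].
  split; [intros i; split; auto|].
  intros z Hz. split; [apply U1A|apply U2B]; intros i; apply Hz.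
Qed.

Lemma box_stream_stream : is_stream box_stream.
Proof.
split; [exact box_stream_topology|]. split.
- intros V _. split; [|split].
  + intros x y [Vx <-]. auto.
  + intros x Vx. split; auto.
  + intros x y z [Vx <-] [_ <-]. split; auto.
- intros O HO x y. simpl. split.
  + intros [Vx <-]. apply pclos_refl. exact Vx.
  + intros H. induction H as [a Wa|a b [V [OV [Va <-]]]|a b c _ [IH1 <-] _ [IH2 <-]]; auto.
    split; [exists V; auto|auto].
Qed.

Lemma box_stream_proj (i : 'I_n) : is_stream_map (X := box_stream) (Y := vI1) (pr i).
Proof.
split.
- intros U HU x Ux. exists (fun j w => if j == i then U w else True). split.
  + intros j. destruct (j == i); [exact HU|apply vI1_open_const].
  + split.
    * intros j. destruct (j == i) eqn:E; [move/eqP: E => ->; exact Ux|exact I].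
    * intros z Hz. pose proof (Hz i) as Hi. simpl in Hi. rewrite eqxx in Hi. exact Hi.
- intros V HV x y [Vx <-]. exact (circ_refl vI1_stream HV Vx).
Qed.

(* Every open set of the product is a union of boxes: the identity
   box_stream -> P is a stream map by the universal property. *)
Lemma open_is_box_open {V : P -> Prop} : isopen P V -> box_open V.
Proof.
intros HV.
destruct (proj2 Hprod box_stream box_stream_stream pr box_stream_proj) as [[u [Hu Hpu]] _].
assert (Hid : forall z, u z = z) by (intros z; apply product_ext; intros i; apply Hpu).
pose proof (proj1 Hu V HV) as H. simpl in H.
assert (E : (fun x => V (u x)) = V)
  by (apply functional_extensionality; intros x; rewrite Hid; reflexivity).
rewrite E in H. exact H.
Qed.

(* Conversely boxes of opens are open: finite intersections of preimages. *)
Lemma box_is_open {U : 'I_n -> vI1 -> Prop} : (forall i, isopen vI1 (U i)) -> isopen P (box U).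
Proof.
intros HU.
assert (L : forall l : seq 'I_n, isopen P (fun z => forall i, i \in l -> U i (pr i z))).
{ intros l. induction l as [|a l IH].
  - assert (E : (fun z : P => forall i : 'I_n, i \in [::] -> U i (pr i z)) = (fun _ => True)).
    { apply functional_extensionality. intros z. apply propositional_extensionality.
      split; [auto|]. intros _ i. rewrite in_nil. discriminate. }
    rewrite E. exact (stream_open_full HP).
  - assert (E : (fun z : P => forall i : 'I_n, i \in a :: l -> U i (pr i z)) =
                (fun z => U a (pr a z) /\ (forall i, i \in l -> U i (pr i z)))).
    { apply functional_extensionality. intros z. apply propositional_extensionality. split.
      - intros H. split; [apply H; rewrite in_cons eqxx; reflexivity|].
        intros i Hi. apply H. rewrite in_cons Hi orbT. reflexivity.
      - intros [H1 H2] i. rewrite in_cons. case/orP; [move/eqP => ->; exact H1|apply H2]. }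
    rewrite E. apply (stream_open_inter HP); [|exact IH].
    exact (proj1 (proj1 Hprod a) (U a) (HU a)). }
assert (E : box U = (fun z => forall i, i \in enum 'I_n -> U i (pr i z))).
{ apply functional_extensionality. intros z. apply propositional_extensionality.
  split; [intros H i _; apply H|]. intros H i. apply H. rewrite mem_enum. reflexivity. }
rewrite E. apply L.
Qed.

(* Inside a box the coordinatewise straight line is a dipath. *)
Lemma box_dipath {U : 'I_n -> vI1 -> Prop} {a b : P} : (forall i, isopen vI1 (U i)) ->
  circ P (box U) a b -> dipath_in (box U) a b.
Proof.
intros HU Hab.
assert (Hi : forall i, circ vI1 (U i) (pr i a) (pr i b)).
{ intros i. apply (proj2 (proj1 Hprod i) (U i) (HU i)).
  apply (circ_mono HP (box_is_open HU) (proj1 (proj1 Hprod i) _ (HU i))); [|exact Hab].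
  intros z Hz. exact (Hz i). }
assert (Hle : forall i, proj1_sig (pr i a) <= proj1_sig (pr i b)) by (intros i; apply (Hi i)).
destruct (proj1 (proj2 Hprod vI1 vI1_stream (fun i => seg (proj1_sig (pr i a)) (proj1_sig (pr i b)))
                (fun i => seg_stream_map (Hle i)))) as [g [Hg Hpg]].
exists g. split; [exact Hg|]. split; [|split].
- apply product_ext. intros i. rewrite Hpg. apply unit_interval_eq, seg_i0, proj2_sig.
- apply product_ext. intros i. rewrite Hpg. apply unit_interval_eq, seg_i1, proj2_sig.
- intros t i. rewrite Hpg.
  pose proof (proj2_sig (pr i a)). pose proof (proj2_sig (pr i b)). pose proof (Hle i).
  apply (proj2 (Hi i)); apply seg_between; simpl in *; lra.
Qed.

(* Cover V by boxes; circ P V is generated by the box pieces, each of which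
   is realised by a dipath, and dipaths compose. *)
Lemma product_path_ordered : path_ordered P.
Proof.
intros V HV x y Hc.
set (O := fun B : P -> Prop => exists U : 'I_n -> vI1 -> Prop,
            (forall i, isopen vI1 (U i)) /\ B = box U /\ (forall z, B z -> V z)).
assert (HO : forall B, O B -> isopen P B) by (intros B [U [HU [-> _]]]; apply box_is_open; exact HU).
assert (E : bigunion O = V).
{ apply functional_extensionality. intros z. apply propositional_extensionality. split.
  - intros [B [[U [_ [_ HB]]] Bz]]. auto.
  - intros Vz. destruct (open_is_box_open HV z Vz) as [U [HU [Uz UV]]].
    exists (box U). split; [exists U; auto|exact Uz]. }
rewrite <- E in Hc |- *. apply (circ_union HP HO) in Hc.
change (dipath_in (bigunion O) x y).
induction Hc as [a Wa|a b [B [[U [HU [-> BV]]] HB]]|a b c _ IH1 _ IH2].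
- apply dipath_in_refl; assumption.
- apply (dipath_in_mono (box U)); [|exact (box_dipath HU HB)].
  intros z Hz. exists (box U). split; [exists U; auto|exact Hz].
- exact (dipath_in_trans HP IH1 IH2).
Qed.

End Cubes.

(* A coend of path-ordered streams is path-ordered: its structure maps lift to
   the path circulation, so the induced map Real -> pstream Real is the
   identity (uniqueness in the universal property), and a stream map
   Real -> pstream Real that is the identity is path-orderedness of Real. *)
Lemma coend_path_ordered {X : precubical} {Cube : nat -> stream}
  {cmap : forall m n (f : bcube m -> bcube n), box_mor f -> Cube m -> Cube n}
  {Real : stream} {iota : forall m, X m -> Cube m -> Real} :
  is_stream Real -> is_coend cmap iota -> (forall m, path_ordered (Cube m)) ->
  path_ordered Real.
Proof.
intros HReal [[Hw1 Hw2] Hu] Hpo.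
assert (Hlift : is_wedge (Y := pstream Real) cmap iota).
{ split; [intros m x; apply lift_to_pstream; auto|exact Hw2]. }
destruct (Hu (pstream Real) (pstream_stream HReal) _ Hlift) as [[u [Hus Hui]] _].
assert (Hid : forall y, u y = y).
{ intros y. apply (proj2 (Hu Real HReal iota (conj Hw1 Hw2)) (fun y => u y) (fun y => y)
    (stream_map_comp Hus (pstream_forget Real)) (stream_map_id Real)); auto. }
assert (Eu : u = fun y => y) by (apply functional_extensionality; exact Hid).
subst u. intros V HV x y H. exact (proj2 (proj2 Hus V HV x y H)).
Qed.

Theorem mainTheorem9
  (X : precubical)
  (Cube : nat -> stream) (pr : forall n, 'I_n -> Cube n -> vI1)
  (cmap : forall m n (f : bcube m -> bcube n), box_mor f -> Cube m -> Cube n)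
  (HCube : forall n, is_stream (Cube n))
  (Hprod : forall n, is_product_vI1 (pr n))
  (Hcmap : linear_cube_maps pr cmap)
  (Real : stream) (iota : forall m, X m -> Cube m -> Real)
  (HReal : is_stream Real)
  (Hcoend : is_coend cmap iota) :
  path_ordered Real.
Proof.
apply (coend_path_ordered HReal Hcoend).
intros m. exact (product_path_ordered (HCube m) (Hprod m)).
Qed.
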